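(* Let $R$ be an associative ring with identity and $a,b,c,d\in R$ such that both $a^{\|(b,c)}$ and $d^{\|(b,c)}$ exist. Then the following are equivalent: (i) $a^{\|(b,c)}a=dd^{\|(b,c)}$; (ii) $a^{\|(b,c)}dd^{\|(b,c)}a=dd^{\|(b,c)}aa^{\|(b,c)}$; (iii) $d^{\|(b,c)}da^{\|(b,c)}a=da^{\|(b,c)}ad^{\|(b,c)}$; (iv) $a^{\|(b,c)}=dd^{\|(b,c)}a^{\|(b,c)}$ and $d^{\|(b,c)}=d^{\|(b,c)}a^{\|(b,c)}a$; (v) $a^{\|(b,c)}ad^{\|(b,c)}=d^{\|(b,c)}a^{\|(b,c)}a$ and $a^{\|(b,c)}dd^{\|(b,c)}=dd^{\|(b,c)}a^{\|(b,c)}$. Moreover, if any of these holds, then $ad$ has a $(b,c)$-inverse and $(ad)^{\|(b,c)}=d^{\|(b,c)}a^{\|(b,c)}$.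
   Context: For $a,b,c\in R$, $a$ is $(b,c)$-invertible if there exists $y\in R$ with $y\in (bRy)\cap(yRc)$, $yab=b$ and $cay=c$; such $y$ is unique and denoted $a^{\|(b,c)}$. *)

From HB Require Import structures.
From mathcomp Require Import all_boot all_order all_algebra.
Set Implicit Arguments. Unset Strict Implicit. Unset Printing Implicit Defensive.
Import GRing.Theory.
Local Open Scope ring_scope.

Definition is_bc_inverse (R : pzRingType) (a b c y : R) : Prop :=
  [/\ exists r : R, y = b * r * y,
      exists s : R, y = y * s * c,
      y * a * b = b
    & c * a * y = c].

From HB Require Import structures.
From mathcomp Require Import all_boot all_order all_algebra.
Set Implicit Arguments. Unset Strict Implicit. Unset Printing Implicit Defensive.
Import GRing.Theory.
Local Open Scope ring_scope.

(* A (b,c)-inverse y of x satisfies y x z = z for z in bR and z x y = z for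
   z in Rc.  As (b,c)-inverses of a and of d both lie in bR and in Rc, every
   mixed product such as ya a yd or yd a ya collapses to a single factor;
   after these collapses (ii) and (iii) become (i), (v) becomes (iv), and
   (i) <-> (iv) as well as the product rule are short computations. *)

Section BCInverse.

Variables (R : pzRingType) (b c : R).

Lemma bc_inverse_fix_left (x y t : R) :
  is_bc_inverse x b c y -> y * x * (b * t) = b * t.
Proof. by case=> _ _ yxb _; rewrite mulrA yxb. Qed.

Lemma bc_inverse_fix_right (x y t : R) :
  is_bc_inverse x b c y -> t * c * x * y = t * c.
Proof. by case=> _ _ _ cxy; rewrite -!mulrA (mulrA c) cxy. Qed.

Lemma bc_inverse_in_left (x y : R) :
  is_bc_inverse x b c y -> exists t, y = b * t.
Proof. by case=> [[r yE] _ _ _]; exists (r * y); rewrite mulrA. Qed.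

Lemma bc_inverse_in_right (x y : R) :
  is_bc_inverse x b c y -> exists t, y = t * c.
Proof. by case=> [_ [s yE] _ _]; exists (y * s). Qed.

Lemma bc_inverse_absorb_left (x y x' y' : R) :
  is_bc_inverse x b c y -> is_bc_inverse x' b c y' -> y * x * y' = y'.
Proof.
by move=> Hy Hy'; have [t ->] := bc_inverse_in_left Hy'; apply: bc_inverse_fix_left.
Qed.

Lemma bc_inverse_absorb_right (x y x' y' : R) :
  is_bc_inverse x b c y -> is_bc_inverse x' b c y' -> y' * x * y = y'.
Proof.
by move=> Hy Hy'; have [t ->] := bc_inverse_in_right Hy'; apply: bc_inverse_fix_right.
Qed.

Lemma bc_inverse_unique (x y y' : R) :
  is_bc_inverse x b c y -> is_bc_inverse x b c y' -> y' = y.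
Proof.
move=> Hy Hy'.
by rewrite -(bc_inverse_absorb_left Hy Hy') (bc_inverse_absorb_right Hy' Hy).
Qed.

Lemma bc_inverse_mul (a d ya yd : R) :
  is_bc_inverse a b c ya -> is_bc_inverse d b c yd -> ya * a = d * yd ->
  is_bc_inverse (a * d) b c (yd * ya).
Proof.
move=> Ha Hd E.
have yaaya : ya * a * ya = ya := bc_inverse_absorb_left Ha Ha.
have yddyd : yd * d * yd = yd := bc_inverse_absorb_left Hd Hd.
case: (Ha) => _ [sa saE] _ caya; case: (Hd) => [[rd rdE] _ ydb _].
split.
- by exists rd; rewrite {1}rdE !mulrA.
- by exists sa; rewrite {1}saE !mulrA.
- have -> : yd * ya * (a * d) * b = yd * (ya * a) * d * b by rewrite !mulrA.
  by rewrite E mulrA yddyd ydb.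
- have -> : c * (a * d) * (yd * ya) = c * a * (d * yd) * ya by rewrite !mulrA.
  by rewrite -E -!mulrA (mulrA ya) yaaya mulrA caya.
Qed.

End BCInverse.

Theorem theorem4p5 (R : pzRingType) (a b c d ya yd : R)
  (Ha : is_bc_inverse a b c ya) (Hd : is_bc_inverse d b c yd) :
  [<-> ya * a = d * yd;
       ya * d * yd * a = d * yd * a * ya;
       yd * d * ya * a = d * ya * a * yd;
       ya = d * yd * ya /\ yd = yd * ya * a;
       ya * a * yd = yd * ya * a /\ ya * d * yd = d * yd * ya]
  /\ (ya * a = d * yd ->
        is_bc_inverse (a * d) b c (yd * ya) /\
        (forall y : R, is_bc_inverse (a * d) b c y -> y = yd * ya)).
Proof.
have yaaya : ya * a * ya = ya := bc_inverse_absorb_left Ha Ha.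
have yaayd : ya * a * yd = yd := bc_inverse_absorb_left Ha Hd.
have yddya : yd * d * ya = ya := bc_inverse_absorb_left Hd Ha.
have yddyd : yd * d * yd = yd := bc_inverse_absorb_left Hd Hd.
have ydaya : yd * a * ya = yd := bc_inverse_absorb_right Ha Hd.
have yadyd : ya * d * yd = ya := bc_inverse_absorb_right Hd Ha.
have ii_i : ya * d * yd * a = d * yd * a * ya <-> ya * a = d * yd.
  by rewrite yadyd -!mulrA (mulrA yd) ydaya.
have iii_i : yd * d * ya * a = d * ya * a * yd <-> ya * a = d * yd.
  by rewrite yddya -!mulrA (mulrA ya) yaayd.
have i_iv : ya * a = d * yd -> ya = d * yd * ya /\ yd = yd * ya * a.
  by move=> E; rewrite -E yaaya -mulrA E mulrA yddyd.
split.
  tfae.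
  - by move/ii_i.
  - by move/ii_i/iii_i.
  - by move/iii_i/i_iv.
  - by rewrite yaayd yadyd => -[].
  - rewrite yaayd yadyd => -[ydE yaE].
    by rewrite {1}yaE -!(mulrA d) -ydE.
move=> E; have Hmul := bc_inverse_mul Ha Hd E.
by split=> // y Hy; apply: bc_inverse_unique Hmul Hy.
Qed.
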